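(* Every bipartite TRVG on $n$ vertices has at most $2n-2$ edges. Moreover, this bound is best possible for $n\ge 7$: for every $n\ge 7$ there exists a bipartite TRVG on $n$ vertices with exactly $2n-2$ edges.
   Context: A graph $G$ is a transparent rectangle visibility graph (TRVG) if its vertices can be represented by a collection of pairwise non-overlapping rectangles in the plane whose sides are parallel to the coordinate axes, one per vertex, such that two distinct vertices are adjacent if and only if there is a horizontal or a vertical line intersecting the interiors of both of their rectangles (other rectangles do not block visibility). *)

From Stdlib Require Import Reals.
From mathcomp Require Import all_boot.
Set Implicit Arguments. Unset Strict Implicit. Unset Printing Implicit Defensive.

Record rect := Rect { rx1 : R; rx2 : R; ry1 : R; ry2 : R }.

Definition rect_valid (r : rect) : Prop := Rlt (rx1 r) (rx2 r) /\ Rlt (ry1 r) (ry2 r).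

Definition in_interior (r : rect) (p : R * R) : Prop :=
  (Rlt (rx1 r) p.1 /\ Rlt p.1 (rx2 r)) /\ (Rlt (ry1 r) p.2 /\ Rlt p.2 (ry2 r)).

Definition non_overlapping (r s : rect) : Prop :=
  ~ (exists p : R * R, in_interior r p /\ in_interior s p).

Definition hline_meets (t : R) (r : rect) : Prop :=
  exists x : R, in_interior r (x, t).
Definition vline_meets (t : R) (r : rect) : Prop :=
  exists y : R, in_interior r (t, y).

Definition tvisible (r s : rect) : Prop :=
  (exists t : R, hline_meets t r /\ hline_meets t s) \/
  (exists t : R, vline_meets t r /\ vline_meets t s).

Definition simple_graph (V : finType) (E : rel V) : Prop :=
  symmetric E /\ irreflexive E.

Definition is_TRVG (V : finType) (E : rel V) : Prop :=
  exists f : V -> rect,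
    (forall v, rect_valid (f v)) /\
    (forall u v, u <> v -> non_overlapping (f u) (f v)) /\
    (forall u v, u <> v -> (E u v <-> tvisible (f u) (f v))).

Definition bipartite (V : finType) (E : rel V) : Prop :=
  exists c : V -> bool, forall u v, E u v -> c u != c v.

Definition num_edges (V : finType) (E : rel V) : nat :=
  #|[set e : {set V} | [exists u, exists v, (e == [set u; v]) && E u v]]|.

From Stdlib Require Import Reals Lra.
From mathcomp Require Import all_boot all_order zify Rstruct.
Set Implicit Arguments. Unset Strict Implicit. Unset Printing Implicit Defensive.
Import Order.TTheory.

(* Upper bound: the edges of a TRVG split into those seen by a horizontal line
   and those seen by a vertical line, and each part is the overlap graph of a
   family of intervals (the projections of the rectangles).  A bipartite graph
   has no triangle, and a triangle-free interval graph is a forest: ordering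
   the intervals by their left ends, a vertex has at most one earlier
   neighbour, since two earlier neighbours would both contain its left end.
   Hence each part has at most n - 1 edges.
   Lower bound: the intervals (2k, 2k+3) for k < 6, (12, 2n) for k = 6 and
   (2k, 2k+1) for k > 6 overlap along a broom, the path 0 - ... - 6 with the
   leaves 7, ..., n-1 hanging at 6.  Take them as x-projections, and the same
   family relabelled by an involution of 0..6 as y-projections.  The
   involution maps no edge of the broom onto an edge of the broom, so no two
   rectangles overlap and the two trees share no edge: 2n - 2 edges. *)

Section EdgeSets.
Variable V : finType.
Implicit Types (E : rel V) (u v w : V).

Lemma set2_inj (a b c d : V) :
  [set a; b] = [set c; d] -> (a = c /\ b = d) \/ (a = d /\ b = c).
Proof.
move=> eq_ab_cd.
have in_cd x : x \in [set a; b] -> x \in [set c; d] by rewrite eq_ab_cd.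
have in_ab x : x \in [set c; d] -> x \in [set a; b] by rewrite eq_ab_cd.
case/set2P: (in_cd a (set21 a b)) => ac; case/set2P: (in_cd b (set22 a b)) => bd.
- by case/set2P: (in_ab d (set22 c d)) => dE; left; split; congruence.
- by left.
- by right.
- by case/set2P: (in_ab c (set21 c d)) => cE; left; split; congruence.
Qed.

Definition edge_set E : {set {set V}} :=
  [set e | [exists u, exists v, (e == [set u; v]) && E u v]].

Lemma num_edgesE E : num_edges E = #|edge_set E|.
Proof. by []. Qed.

Lemma edge_setP E e : reflect (exists u v, e = [set u; v] /\ E u v) (e \in edge_set E).
Proof.
rewrite inE; apply: (iffP existsP) => [[u /existsP[v /andP[/eqP-> Euv]]]|[u [v [-> Euv]]]].
  by exists u, v.
by exists u; apply/existsP; exists v; rewrite eqxx.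
Qed.

Lemma mem_edge_set E u v : E u v -> [set u; v] \in edge_set E.
Proof. by move=> Euv; apply/edge_setP; exists u, v. Qed.

Lemma edge_set_union E E1 E2 :
  E =2 (fun u v => E1 u v || E2 u v) -> edge_set E = edge_set E1 :|: edge_set E2.
Proof.
move=> E_U; apply/setP => e; rewrite in_setU.
apply/edge_setP/orP => [[u [v [-> /[!E_U] /orP[]]]]|].
- by left; apply: mem_edge_set.
- by right; apply: mem_edge_set.
by case=> /edge_setP[u [v [-> Euv]]]; exists u, v; rewrite E_U Euv ?orbT.
Qed.

Lemma leq_num_edgesU E E1 E2 :
  E =2 (fun u v => E1 u v || E2 u v) -> num_edges E <= num_edges E1 + num_edges E2.
Proof. by move=> /edge_set_union E_U; rewrite !num_edgesE E_U leq_card_setU. Qed.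

Lemma num_edgesU_disjoint E E1 E2 :
  symmetric E2 -> (forall u v, E1 u v -> ~~ E2 u v) ->
  E =2 (fun u v => E1 u v || E2 u v) -> num_edges E = num_edges E1 + num_edges E2.
Proof.
move=> E2_sym E12 /edge_set_union E_U; rewrite !num_edgesE E_U.
apply/eqP; rewrite (leq_card_setU _ _).2 disjoints_subset.
apply/subsetP => _ /edge_setP[u [v [-> E1uv]]]; rewrite inE.
apply/edge_setP => -[u' [v' [/set2_inj[[<- <-]|[<- <-]] E2uv]]].
  by rewrite (negbTE (E12 _ _ E1uv)) in E2uv.
by rewrite E2_sym (negbTE (E12 _ _ E1uv)) in E2uv.
Qed.

Lemma leq_num_edges_descent E (r : V) (rank : V -> nat) :
  (forall v, v != r -> exists2 w, E v w & rank w < rank v) -> #|V|.-1 <= num_edges E.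
Proof.
move=> descent; pose down v := odflt v [pick w | E v w && (rank w < rank v)].
have downP v : v != r -> E v (down v) && (rank (down v) < rank v).
  move=> /descent[w Evw rank_wv]; rewrite /down; case: pickP => [//|/(_ w)].
  by rewrite Evw rank_wv.
rewrite num_edgesE -(cardsC1 r) -(@card_in_imset _ _ (fun v => [set v; down v])).
  apply/subset_leq_card/subsetP => e /imsetP[v]; rewrite in_setC1 => /downP/andP[Ev _] ->.
  exact: mem_edge_set.
move=> u v; rewrite !inE => /downP/andP[_ ru] /downP/andP[_ rv].
case/set2_inj => [[] //|[uE vE]].
by move: ru rv; rewrite vE -uE => /ltn_trans/[apply]; rewrite ltnn.
Qed.

Definition triangle_free E := forall u v w, E u v -> E v w -> E w u -> False.

Lemma bipartite_triangle_free E : bipartite E -> triangle_free E.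
Proof.
case=> c Ec u v w /Ec cuv /Ec cvw /Ec cwu.
by move: cuv cvw cwu; case: (c u); case: (c v); case: (c w).
Qed.

Lemma triangle_free_subrel E1 E2 : subrel E1 E2 -> triangle_free E2 -> triangle_free E1.
Proof.
move=> sub12 tf2 u v w Euv Evw Ewu.
exact: tf2 (sub12 _ _ Euv) (sub12 _ _ Evw) (sub12 _ _ Ewu).
Qed.

End EdgeSets.

Section IntervalGraph.
Context {disp : Order.disp_t} {T : orderType disp}.
Local Open Scope order_scope.

Definition overlap (a b : T * T) : bool := (a.1 < b.2) && (b.1 < a.2).

Lemma overlapC (a b : T * T) : overlap a b = overlap b a.
Proof. by rewrite /overlap andbC. Qed.

Variables (V : finType) (I : V -> T * T).

Definition interval_graph : rel V := fun u v => (u != v) && overlap (I u) (I v).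

Lemma interval_graph_sym : symmetric interval_graph.
Proof. by move=> u v; rewrite /interval_graph eq_sym overlapC. Qed.

Lemma interval_graph_irr : irreflexive interval_graph.
Proof. by move=> u; rewrite /interval_graph eqxx. Qed.

Lemma num_edges_interval_graph :
  triangle_free interval_graph -> num_edges interval_graph <= #|V|.-1.
Proof.
move=> tf; rewrite num_edgesE.
have [->|[_ /edge_setP[u0 _]]] := set_0Vmem (edge_set interval_graph).
  by rewrite cards0.
pose key v : T *l 'I_#|V| := ((I v).1, enum_rank v).
have key_inj : injective key by move=> u v [_ /enum_rank_inj].
pose earlier w p := (key p < key w) && interval_graph p w.
have earlier_uniq w p q : earlier w p -> earlier w q -> p = q.
  case/andP=> /andP[pw _] Gpw; case/andP=> /andP[qw _] Gqw.
  apply/eqP/negPn/negP => neq_pq; apply: (tf p q w) => //.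
    case/andP: Gpw => _ /andP[_ w_p]; case/andP: Gqw => _ /andP[_ w_q].
    by rewrite /interval_graph neq_pq /overlap (le_lt_trans pw w_q) (le_lt_trans qw w_p).
  by rewrite interval_graph_sym.
pose parent w := odflt w [pick p | earlier w p].
have parentE w p : earlier w p -> parent w = p.
  move=> ewp; rewrite /parent; case: pickP => [q /(earlier_uniq _ _ _ ewp) -> //|/(_ p)].
  by rewrite ewp.
pose m := [arg min_(v < u0) key v].
have key_min v : key m <= key v by rewrite /m; case: arg_minP => // i _; apply.
have sub : edge_set interval_graph \subset (fun w => [set w; parent w]) @: [set~ m].
  apply/subsetP => _ /edge_setP[u [v [-> Guv]]].
  wlog uv : u v Guv / key u < key v.
    move=> gen; case: (ltgtP (key u) (key v)) => [|vu|/key_inj uv]; first exact: gen.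
    - by rewrite setUC; apply: gen; rewrite // interval_graph_sym.
    - by rewrite uv interval_graph_irr in Guv.
  apply/imsetP; exists v; last by rewrite setUC (parentE v u) // /earlier uv.
  by rewrite !inE; apply: contraTneq uv => ->; rewrite -leNgt key_min.
apply: leq_trans (subset_leq_card sub) _.
by rewrite -(cardsC1 m) leq_imset_card.
Qed.

End IntervalGraph.

Section Rectangles.
Local Open Scope R_scope.
Implicit Types r s : rect.

Definition xspan r : R * R := (rx1 r, rx2 r).
Definition yspan r : R * R := (ry1 r, ry2 r).

Lemma open_intervals_meet (a b c d : R) : Rlt a b -> Rlt c d ->
  (exists t, (Rlt a t /\ Rlt t b) /\ (Rlt c t /\ Rlt t d)) <-> overlap (a, b) (c, d).
Proof.
move=> ab cd; split=> [[t [[a_t t_b] [c_t t_d]]]|/andP[/RltP ad /RltP cb]].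
  by rewrite /overlap /=; apply/andP; split; apply/RltP; lra.
have max_min : Rlt (Rmax a c) (Rmin b d).
  by apply: Rmax_lub_lt; apply: Rmin_glb_lt.
exists ((Rmax a c + Rmin b d) / 2).
by have := Rmax_l a c; have := Rmax_r a c; have := Rmin_l b d; have := Rmin_r b d; lra.
Qed.

Lemma tvisibleP r s : rect_valid r -> rect_valid s ->
  tvisible r s <-> overlap (yspan r) (yspan s) || overlap (xspan r) (xspan s).
Proof.
case: r => a b c d; case: s => a' b' c' d' [/= ab cd] [/= ab' cd'].
rewrite /tvisible /hline_meets /vline_meets /in_interior /xspan /yspan /=.
split=> [[[t [[x [_ ?]] [x' [_ ?]]]]|[t [[y [? _]] [y' [? _]]]]]|/orP[]].
- by apply/orP; left; apply/(open_intervals_meet cd cd'); exists t.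
- by apply/orP; right; apply/(open_intervals_meet ab ab'); exists t.
- move/(open_intervals_meet cd cd') => [t [? ?]]; left; exists t.
  by split; [exists ((a + b) / 2) | exists ((a' + b') / 2)]; split=> //; lra.
- move/(open_intervals_meet ab ab') => [t [? ?]]; right; exists t.
  by split; [exists ((c + d) / 2) | exists ((c' + d') / 2)]; split=> //; lra.
Qed.

Lemma non_overlapping_spans r s :
  ~~ (overlap (xspan r) (xspan s) && overlap (yspan r) (yspan s)) -> non_overlapping r s.
Proof.
move=> /negP no_meet [[x y] [[[? ?] [? ?]] [[? ?] [? ?]]]]; apply: no_meet.
by rewrite /overlap /=; apply/andP; split; apply/andP; split; apply/RltP; lra.
Qed.

Lemma TRVG_interval_graphs (V : finType) (E : rel V) (X Y : V -> R * R) :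
  (forall v, Rlt (X v).1 (X v).2 /\ Rlt (Y v).1 (Y v).2) ->
  (forall u v, u != v -> ~~ (overlap (X u) (X v) && overlap (Y u) (Y v))) ->
  E =2 (fun u v => interval_graph Y u v || interval_graph X u v) -> is_TRVG E.
Proof.
move=> spans_valid no_double E_XY.
pose f v := Rect (X v).1 (X v).2 (Y v).1 (Y v).2.
have xspanE v : xspan (f v) = X v by rewrite /xspan /= -surjective_pairing.
have yspanE v : yspan (f v) = Y v by rewrite /yspan /= -surjective_pairing.
have f_valid v : rect_valid (f v) by exact: spans_valid.
exists f; split=> //; split=> u v /eqP uv.
  by apply: non_overlapping_spans; rewrite xspanE yspanE no_double.
have := tvisibleP (f_valid u) (f_valid v); rewrite !xspanE !yspanE => vis.
by rewrite E_XY /interval_graph uv; apply: iff_sym.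
Qed.

Definition INR2 (p : nat * nat) : R * R := (INR p.1, INR p.2).

Lemma overlap_INR2 a b : overlap (INR2 a) (INR2 b) = overlap a b.
Proof.
have ltR m k : (INR m < INR k)%O = (m < k)%N.
  by apply/RltP/idP => [/INR_lt/ssrnat.ltP|/ssrnat.ltP/lt_INR].
by rewrite /overlap /= !ltR.
Qed.

End Rectangles.

Theorem num_edges_bipartite_TRVG (V : finType) (E : rel V) :
  simple_graph E -> bipartite E -> is_TRVG E -> num_edges E <= 2 * #|V| - 2.
Proof.
case=> _ E_irr /bipartite_triangle_free E_tf [f [f_valid [_ E_vis]]].
pose Gy := interval_graph (yspan \o f); pose Gx := interval_graph (xspan \o f).
have E_yx : E =2 (fun u v => Gy u v || Gx u v).
  move=> u v; have [->|uv] := eqVneq u v.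
    by rewrite E_irr /Gy /Gx !interval_graph_irr.
  have vis := iff_trans (E_vis u v (elimN eqP uv)) (tvisibleP (f_valid u) (f_valid v)).
  by rewrite /Gy /Gx /interval_graph uv; apply/idP/idP => /vis.
have part_le I : subrel (interval_graph I) E -> num_edges (interval_graph I) <= #|V|.-1.
  by move=> sub; apply: num_edges_interval_graph; exact: triangle_free_subrel sub E_tf.
have Gy_le : num_edges Gy <= #|V|.-1.
  by apply: part_le => u v Gyuv; rewrite E_yx; apply/orP; left.
have Gx_le : num_edges Gx <= #|V|.-1.
  by apply: part_le => u v Gxuv; rewrite E_yx; apply/orP; right.
have := leq_add Gy_le Gx_le; have := leq_num_edgesU E_yx; lia.
Qed.

Definition broom (k l : nat) : bool :=
  [|| (k.+1 == l) && (l <= 6), (l.+1 == k) && (k <= 6),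
      (k == 6) && (6 < l) | (l == 6) && (6 < k)].

Definition broom_parent (k : nat) : nat := if k <= 6 then k.-1 else 6.

Definition broom_colour (k : nat) : bool := odd k || (6 < k).

Lemma broom_irr : irreflexive broom.
Proof. by move=> k; rewrite /broom; lia. Qed.

Lemma broom_parentP k : 0 < k -> broom k (broom_parent k) && (broom_parent k < k).
Proof. by rewrite /broom /broom_parent; case: (leqP k 6); lia. Qed.

Lemma broom_colour_neq k l : broom k l -> broom_colour k != broom_colour l.
Proof. by rewrite /broom /broom_colour; lia. Qed.

Definition shuffle (k : nat) : nat := nth k [:: 2; 5; 0; 3; 6; 1; 4] k.

Lemma shuffle_id k : 6 < k -> shuffle k = k.
Proof. by move=> k_gt6; rewrite /shuffle nth_default. Qed.

Lemma shuffleK : involutive shuffle.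
Proof.
move=> k; case: (ltnP 6 k) => [k_gt6|]; first by rewrite !shuffle_id.
by case: k => [|[|[|[|[|[|[|]]]]]]].
Qed.

Lemma shuffle_lt m : 7 <= m -> forall k, k < m -> shuffle k < m.
Proof.
move=> m_ge7 k; case: (ltnP 6 k) => [k_gt6|k_le6 _]; first by rewrite shuffle_id.
by apply: leq_trans m_ge7; case: k k_le6 => [|[|[|[|[|[|[|]]]]]]].
Qed.

Lemma broom_colour_shuffle k : broom_colour (shuffle k) = broom_colour k.
Proof.
case: (ltnP 6 k) => [k_gt6|]; first by rewrite shuffle_id.
by case: k => [|[|[|[|[|[|[|]]]]]]].
Qed.

Lemma broom_shuffle k l : ~~ (broom k l && broom (shuffle k) (shuffle l)).
Proof.
case: (ltnP 6 k) => [k_gt6|k_le6]; case: (ltnP 6 l) => [l_gt6|l_le6].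
- by rewrite /broom; lia.
- rewrite (shuffle_id k_gt6).
  by case: l l_le6 => [|[|[|[|[|[|[|]]]]]]] //= _; rewrite /broom /shuffle /=; lia.
- rewrite (shuffle_id l_gt6).
  by case: k k_le6 => [|[|[|[|[|[|[|]]]]]]] //= _; rewrite /broom /shuffle /=; lia.
- by case: k k_le6 => [|[|[|[|[|[|[|]]]]]]] //= _; case: l l_le6 => [|[|[|[|[|[|[|]]]]]]].
Qed.

Section Broom.
Variable n : nat.
Hypothesis n_ge7 : 7 <= n.

Definition broom_span (k : nat) : nat * nat :=
  if k < 6 then (2 * k, 2 * k + 3) else if k == 6 then (12, 2 * n) else (2 * k, 2 * k + 1).

Lemma broom_span_valid k : k < n -> (broom_span k).1 < (broom_span k).2.
Proof. by rewrite /broom_span; case: (ltnP k 6) => _; [|case: eqP] => /=; lia. Qed.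

Lemma overlap_broom_span k l :
  k < n -> l < n -> k != l -> overlap (broom_span k) (broom_span l) = broom k l.
Proof.
rewrite /broom_span /overlap /broom => kn ln kl.
case: (ltnP k 6) => k6; [|case: eqP => k6'];
  case: (ltnP l 6) => l6; try case: eqP => l6'; rewrite /=; apply/idP/idP; lia.
Qed.

Section Relabelled.
Variable sigma : nat -> nat.
Hypotheses (sigmaK : involutive sigma) (sigma_lt : forall k, k < n -> sigma k < n).

Definition broom_graph : rel 'I_n := interval_graph (fun v : 'I_n => broom_span (sigma v)).

Lemma broom_graphE u v : broom_graph u v = broom (sigma u) (sigma v).
Proof.
rewrite /broom_graph /interval_graph; have [->|uv] := eqVneq u v; first by rewrite broom_irr.
have sigma_uv : sigma u != sigma v by rewrite (inj_eq (can_inj sigmaK)) val_eqE.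
by rewrite overlap_broom_span ?sigma_lt.
Qed.

Lemma num_edges_broom_graph : n.-1 <= num_edges broom_graph.
Proof.
have n_gt0 : 0 < n by apply: leq_trans n_ge7.
rewrite -{1}(card_ord n).
apply: (@leq_num_edges_descent _ _ (Ordinal (sigma_lt n_gt0)) (fun v => sigma v)) => v v_root.
have sigma_v_gt0 : 0 < sigma v.
  rewrite lt0n; apply: contra v_root => /eqP sigma_v0.
  by apply/eqP/val_inj; rewrite /= -sigma_v0 sigmaK.
have /andP[adj lt_parent] := broom_parentP sigma_v_gt0.
have w_lt : sigma (broom_parent (sigma v)) < n.
  by apply/sigma_lt/(ltn_trans lt_parent)/sigma_lt.
by exists (Ordinal w_lt); rewrite ?broom_graphE /= sigmaK.
Qed.

End Relabelled.

Let shuffle_ltn : forall k, k < n -> shuffle k < n := shuffle_lt n_ge7.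
Let id_ltn : forall k, k < n -> id k < n := fun _ kn => kn.
Let idK : involutive (@id nat) := fun _ => erefl.

Definition broom_pair_graph : rel 'I_n :=
  fun u v => broom_graph shuffle u v || broom_graph id u v.

Lemma broom_pair_graphE u v :
  broom_pair_graph u v = broom (shuffle u) (shuffle v) || broom u v.
Proof.
by rewrite /broom_pair_graph (broom_graphE shuffleK shuffle_ltn) (broom_graphE idK id_ltn).
Qed.

Lemma broom_pair_graph_simple : simple_graph broom_pair_graph.
Proof.
split=> [u v|u]; rewrite /broom_pair_graph /broom_graph.
  by rewrite interval_graph_sym (interval_graph_sym _ u).
by rewrite !interval_graph_irr.
Qed.

Lemma broom_pair_graph_bipartite : bipartite broom_pair_graph.
Proof.
exists (fun v : 'I_n => broom_colour v) => u v.
rewrite broom_pair_graphE => /orP[|/broom_colour_neq //] /broom_colour_neq.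
by rewrite !broom_colour_shuffle.
Qed.

Lemma broom_pair_graph_TRVG : is_TRVG broom_pair_graph.
Proof.
apply: (@TRVG_interval_graphs _ _ (fun v : 'I_n => INR2 (broom_span v))
                                  (fun v : 'I_n => INR2 (broom_span (shuffle v)))).
- by move=> v; split; apply/lt_INR/ssrnat.ltP/broom_span_valid; rewrite ?shuffle_ltn.
- move=> u v uv; rewrite !overlap_INR2 !overlap_broom_span ?shuffle_ltn //.
    exact: broom_shuffle.
  by rewrite (inj_eq (can_inj shuffleK)) val_eqE.
- by move=> u v; rewrite /broom_pair_graph /broom_graph /interval_graph !overlap_INR2.
Qed.

Lemma num_edges_broom_pair_graph : num_edges broom_pair_graph = 2 * n - 2.
Proof.
apply/eqP; rewrite eqn_leq.
have := num_edges_bipartite_TRVG broom_pair_graph_simple broom_pair_graph_bipartite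
  broom_pair_graph_TRVG.
rewrite card_ord => -> /=.
rewrite (@num_edgesU_disjoint _ _ (broom_graph shuffle) (broom_graph id)) //.
- have := num_edges_broom_graph shuffleK shuffle_ltn.
  have := num_edges_broom_graph idK id_ltn.
  lia.
- exact: interval_graph_sym.
- move=> u v; rewrite (broom_graphE shuffleK shuffle_ltn) (broom_graphE idK id_ltn).
  by move=> Euv; have := broom_shuffle u v; rewrite Euv andbT.
Qed.

End Broom.

Theorem theorem2 :
  (forall (V : finType) (E : rel V),
      simple_graph E -> bipartite E -> is_TRVG E ->
      num_edges E <= 2 * #|V| - 2) /\
  (forall n : nat, 7 <= n ->
      exists E : rel 'I_n,
        [/\ simple_graph E, bipartite E, is_TRVG E & num_edges E = 2 * n - 2]).
Proof.
split; first exact: num_edges_bipartite_TRVG.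
move=> n n_ge7; exists (@broom_pair_graph n); split.
- exact: broom_pair_graph_simple.
- exact: broom_pair_graph_bipartite.
- exact: broom_pair_graph_TRVG n_ge7.
- exact: num_edges_broom_pair_graph n_ge7.
Qed.
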